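(* Let $P$ be an affine property of finite sets of integers. For each positive integer $n$, let $S(n;P) \subseteq \{1,2,\dots,n\}$ be a subset of largest possible cardinality among the subsets of $\{1,\dots,n\}$ having property $P$, let $f(n;P) = |S(n;P)|$, and let $C_P(n) = f(n;P)/n$. Then $$\sum_{a \in S(n;P)} z^a = C_P(n) \sum_{k=1}^{n} z^k + o(n)$$ as $n \to \infty$, uniformly on $|z| = 1$; that is, $\sup_{|z|=1} \left| \sum_{a \in S(n;P)} z^a - C_P(n) \sum_{k=1}^{n} z^k \right| = o(n)$.
   Context: A property $P$ of finite sets of integers is called affine if (C1) for each fixed pair of integers $\alpha \neq 0$ and $\beta$, a set $\{a_n\}$ has $P$ if and only if $\{\alpha a_n + \beta\}$ has $P$; and (C2) if a set has $P$, then all of its subsets have $P$. Examples: the trivial property of just being a set, or the property of not containing any arithmetic progression of three distinct terms. *)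

From HB Require Import structures.
From mathcomp Require Import all_boot all_order all_algebra.
From mathcomp Require Import finmap.
From mathcomp Require Import complex.
From mathcomp Require Import reals.
Set Implicit Arguments. Unset Strict Implicit. Unset Printing Implicit Defensive.
Import Order.TTheory GRing.Theory Num.Theory.
Local Open Scope ring_scope.
Local Open Scope fset_scope.

Definition int_set_property := {fset int} -> Prop.

(* (C1) invariance under nondegenerate affine maps x |-> alpha x + beta,
   (C2) heredity under subsets. *)
Definition affine_property (P : int_set_property) : Prop :=
  (forall (alpha beta : int), alpha != 0 ->
     forall A : {fset int}, P A <-> P [fset (alpha * x + beta)%R | x in A])
  /\ (forall A B : {fset int}, fsubset B A -> P A -> P B).

Definition in_range (n : nat) (A : {fset int}) : Prop :=
  forall a, a \in A -> (1 <= a) && (a <= n%:Z).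

Definition is_max_P (P : int_set_property) (n : nat) (S : {fset int}) : Prop :=
  [/\ in_range n S, P S &
      forall T : {fset int}, in_range n T -> P T -> (#|` T| <= #|` S|)%N].

From HB Require Import structures.
From mathcomp Require Import all_boot all_order all_algebra.
From mathcomp Require Import finmap.
From mathcomp Require Import complex.
From mathcomp Require Import classical_sets reals.
From mathcomp Require Import zify ring lra.
Import Order.TTheory GRing.Theory Num.Theory.
Set Implicit Arguments. Unset Strict Implicit. Unset Printing Implicit Defensive.
Local Open Scope ring_scope.

(* Fix m whose density f(m)/m is within e of the infimum of all densities.  By (C1)
   and (C2) every arithmetic progression of length m meets S(n) in at most f(m)
   points, so on each progression the excess of S(n) over the mean density f(n)/n is
   at most m e.  These excesses sum to zero over a partition of {1, ..., n} into
   progressions, hence their absolute values sum to at most about 2 e n.  Given z,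
   Dirichlet's theorem yields a bounded q with z^q close to 1; on progressions of
   difference q the character z^a is then almost constant, and the exponential sum
   of S(n) minus f(n)/n times the full geometric sum is bounded by the absolute
   excesses plus a small error. *)

Lemma big_nat_shift (V : nmodType) (F : nat -> V) (a k : nat) :
  \sum_(a <= t < a + k) F t = \sum_(0 <= i < k) F (a + i)%N.
Proof.
by rewrite -{1}(add0n a) big_addn addKn; apply: eq_bigr => i _; rewrite addnC.
Qed.

Lemma big_nat_progressions (V : nmodType) (F : nat -> V) (n B q m : nat) :
  (B * (q * m) <= n)%N ->
  \sum_(0 <= t < n) F t =
  \sum_(0 <= b < B) \sum_(0 <= j < q) \sum_(0 <= i < m) F (b * (q * m) + j + i * q)%N
  + \sum_(B * (q * m) <= t < n) F t.
Proof.
move=> le_n; rewrite (big_cat_nat (leq0n _) le_n) /=; congr (_ + _).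
rewrite big_nat_mul; apply: eq_bigr => b _.
rewrite mulSn addnC big_nat_shift; set a := (b * _)%N.
rewrite mulnC big_nat_mul.
under eq_bigr => i _ do rewrite mulSn addnC big_nat_shift.
rewrite exchange_big /=.
by apply: eq_bigr => j _; apply: eq_bigr => i _; rewrite (addnC (i * q)) addnA.
Qed.

Lemma sum_norm_progression_sums_le (R : realDomainType) (d : nat -> R) (n B q m : nat) (c : R) :
  (B * (q * m) <= n)%N -> 0 <= c -> (forall t, d t <= 1) ->
  (forall a, \sum_(0 <= i < m) d (a + i * q)%N <= c) ->
  \sum_(0 <= t < n) d t = 0 ->
  \sum_(0 <= b < B) \sum_(0 <= j < q) `|\sum_(0 <= i < m) d (b * (q * m) + j + i * q)%N|
    <= 2 * c * (B * q)%:R + (n - B * (q * m))%:R.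
Proof.
move=> le_n c_ge0 d_le progression_le sum_d.
have tail_le : \sum_(B * (q * m) <= t < n) d t <= (n - B * (q * m))%:R.
  by apply: le_trans (ler_sum _ (fun t _ => d_le t)) _; rewrite sumr_const_nat.
have norm_le (x : R) : x <= c -> `|x| <= 2 * c - x.
  by move=> x_le; rewrite ler_norml; apply/andP; split; lra.
apply: le_trans (ler_sum _ (fun b _ => ler_sum _ (fun j _ => norm_le _ (progression_le _)))) _.
move: sum_d; rewrite (big_nat_progressions _ le_n) => sum_d.
under eq_bigr do rewrite sumrB sumr_const_nat subn0.
by rewrite sumrB sumr_const_nat subn0 -mulrnA mulr_natr (mulnC q); lra.
Qed.

Lemma norm_expr_sub1 (R : numDomainType) (zeta : R) (i : nat) : `|zeta| = 1 ->
  `|zeta ^+ i - 1| <= i%:R * `|zeta - 1|.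
Proof.
move=> hz; elim: i => [|i IH]; first by rewrite expr0 subrr normr0 mul0r.
have -> : zeta ^+ i.+1 - 1 = zeta * (zeta ^+ i - 1) + (zeta - 1) by rewrite exprS; ring.
apply: le_trans (ler_normD _ _) _.
by rewrite normrM hz mul1r -natr1 mulrDl mul1r lerD2r.
Qed.

Lemma exists_near_inf (R : realType) (g : nat -> R) (lb e : R) :
  (forall k, (0 < k)%N -> lb <= g k) -> 0 < e ->
  exists2 m, (0 < m)%N & forall k, (0 < k)%N -> g m - e <= g k.
Proof.
move=> g_lb e_gt0.
pose E : set R := fun x => exists2 k, (0 < k)%N & g k = x.
have E_inf : has_inf E.
  split; first by exists (g 1%N), 1%N.
  by exists lb => _ [k k_gt0 <-]; exact: g_lb.
have [_ [m m_gt0 <-] lt_m] := inf_adherent e_gt0 E_inf.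
exists m => // k k_gt0.
have := ge_inf E_inf.2 (ex_intro2 _ _ k k_gt0 erefl); lra.
Qed.

Local Open Scope complex_scope.

Lemma normcR (R : rcfType) (x : R) : `|x%:C| = `|x|%:C.
Proof. by rewrite normc_def /= expr0n /= addr0 sqrtr_sqr. Qed.

Lemma norm_sum_progression_le (R : rcfType) (m : nat) (d : nat -> R) (w zeta : R[i]) :
  (forall i, `|d i| <= 1) -> `|w| = 1 -> `|zeta| = 1 ->
  `|\sum_(0 <= i < m) (d i)%:C * (w * zeta ^+ i)|
    <= `|\sum_(0 <= i < m) d i|%:C + (m * m)%:R * `|zeta - 1|.
Proof.
move=> hd hw hz.
have -> : \sum_(0 <= i < m) (d i)%:C * (w * zeta ^+ i) =
    (\sum_(0 <= i < m) d i)%:C * w + \sum_(0 <= i < m) (d i)%:C * w * (zeta ^+ i - 1).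
  by rewrite rmorph_sum mulr_suml -big_split /=; apply: eq_bigr => i _; ring.
apply: le_trans (ler_normD _ _) _.
rewrite normrM hw mulr1 normcR lerD2l.
apply: le_trans (ler_norm_sum _ _ _) _.
have -> : (m * m)%:R * `|zeta - 1| = \sum_(0 <= i < m) m%:R * `|zeta - 1|.
  by rewrite sumr_const_nat subn0 natrM -mulrA mulr_natl.
rewrite big_nat [X in _ <= X]big_nat /=; apply: ler_sum => i lt_im.
rewrite !normrM hw mulr1 normcR -[X in _ <= X]mul1r.
apply: ler_pM.
- by rewrite ler0c.
- exact: normr_ge0.
- by rewrite -[1 : R[i]]/(1%:C) lecR.
- apply: le_trans (norm_expr_sub1 i hz) _.
  by rewrite ler_wpM2r // ler_nat ltnW.
Qed.

Lemma normc_le_Re_Im (R : rcfType) (w : R[i]) :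
  `|w| <= (`|complex.Re w| + `|complex.Im w|)%:C.
Proof.
rewrite [w in `|w|]complexE rmorphD; apply: le_trans (ler_normD _ _) _.
have normi : `|'i : R[i]| = 1 by rewrite normc_def /= expr0n expr1n add0r sqrtr1.
by rewrite normrM normi mul1r !normcR.
Qed.

Lemma unit_circle_Re_Im (R : rcfType) (w : R[i]) : `|w| = 1 ->
  -1 <= complex.Re w <= 1 /\ -1 <= complex.Im w <= 1.
Proof.
move=> hw; have : (complex.Re w ^+ 2 + complex.Im w ^+ 2)%:C = 1 :> R[i].
  by rewrite add_Re2_Im2 hw expr1n.
move/complexI => sum_sq.
have Re2_ge0 : 0 <= complex.Re w ^+ 2 by apply: sqr_ge0.
have Im2_ge0 : 0 <= complex.Im w ^+ 2 by apply: sqr_ge0.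
by split; apply/andP; split; nra.
Qed.

Lemma truncn_eq_dist (R : realType) (x y : R) :
  Num.truncn x = Num.truncn y -> 0 <= x -> 0 <= y -> `|x - y| < 1.
Proof.
move=> eq_xy /truncn_itv /andP[x_ge x_lt] /truncn_itv /andP[y_ge y_lt].
move: x_lt y_lt; rewrite eq_xy -natr1 in x_ge * => x_lt y_lt.
by rewrite ltr_norml; apply/andP; split; lra.
Qed.

(* Index of the cell containing x when [-1, 1] is cut into K cells of length 2/K
   (the endpoint 1 gets the extra index K). *)
Definition grid_cell (R : realType) (K : nat) (x : R) : nat :=
  Num.truncn ((x + 1) * K%:R / 2).

Lemma grid_cell_le (R : realType) (K : nat) (x : R) : -1 <= x <= 1 -> (grid_cell K x <= K)%N.
Proof.
move=> /andP[? ?]; rewrite /grid_cell truncn_le_nat.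
have [->|K_gt0] := posnP K; first by rewrite mulr0 mul0r ltr01.
suff h : (x + 1) * K%:R / 2 <= K%:R by apply: (le_lt_trans h); rewrite ltr_nat.
by rewrite ler_pdivrMr // mulrC ler_pM2l ?ltr0n //; lra.
Qed.

Lemma grid_cell_dist (R : realType) (K : nat) (x y : R) : (0 < K)%N ->
  -1 <= x -> -1 <= y -> grid_cell K x = grid_cell K y -> `|x - y| < 2 / K%:R.
Proof.
move=> K_gt0 x_ge y_ge /truncn_eq_dist.
have scaled_ge0 (t : R) : -1 <= t -> 0 <= (t + 1) * K%:R / 2.
  by move=> ?; rewrite divr_ge0 // mulr_ge0 //; lra.
move=> /(_ (scaled_ge0 _ x_ge) (scaled_ge0 _ y_ge)).
have half_K_gt0 : 0 < K%:R / 2 :> R by rewrite divr_gt0 ?ltr0n.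
have -> : (x + 1) * K%:R / 2 - (y + 1) * K%:R / 2 = (x - y) * (K%:R / 2) by ring.
by rewrite normrM (gtr0_norm half_K_gt0) -ltr_pdivlMr // mul1r invf_div.
Qed.

(* Pigeonhole: among z^0, ..., z^((K+1)^2), two have both their real and their
   imaginary parts in the same grid cell. *)
Lemma dirichlet_unit_circle (R : realType) (K : nat) (z : R[i]) :
  (0 < K)%N -> `|z| = 1 ->
  exists2 q, (0 < q <= K.+1 ^ 2)%N & `|z ^+ q - 1| <= (4 / K%:R)%:C.
Proof.
move=> K_gt0 hz.
have hzn n : `|z ^+ n| = 1 by rewrite normrX hz expr1n.
pose cell (x : R) : 'I_K.+1 := inord (grid_cell K x).
pose c (n : 'I_(K.+1 ^ 2).+1) := (cell (complex.Re (z ^+ n)), cell (complex.Im (z ^+ n))).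
have /injectivePn [i [j ne_ij eq_ij]] : ~~ injectiveb c.
  by apply/negP => /injectiveP /leq_card; rewrite card_prod !card_ord; lia.
wlog lt_ij : i j ne_ij eq_ij / (i < j)%N.
  move=> hwlog; case: (ltngtP i j) => [|lt_ji|/val_inj eq]; first exact: hwlog.
  - by apply: (hwlog j i); rewrite // eq_sym.
  - by rewrite eq eqxx in ne_ij.
exists (j - i)%N.
  by rewrite subn_gt0 lt_ij /= (leq_trans (leq_subr _ _)) // -ltnS.
have zi_neq0 : z ^+ i != 0 by rewrite -normr_eq0 hzn oner_eq0.
have -> : z ^+ (j - i) - 1 = (z ^+ j - z ^+ i) / z ^+ i.
  by rewrite mulrBl divff // expfB.
rewrite normrM normfV hzn invr1 mulr1.
apply: le_trans (normc_le_Re_Im _) _.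
have cell_dist (x y : R) : -1 <= x <= 1 -> -1 <= y <= 1 -> cell x = cell y ->
    `|x - y| < 2 / K%:R.
  move=> /andP[x_ge x_le] /andP[y_ge y_le] /(congr1 (@nat_of_ord _)).
  rewrite /cell !inordK ?ltnS ?grid_cell_le ?x_ge ?x_le ?y_ge ?y_le //.
  exact: grid_cell_dist.
have ReB (u v : R[i]) : complex.Re (u - v) = complex.Re u - complex.Re v by case: u; case: v.
have ImB (u v : R[i]) : complex.Im (u - v) = complex.Im u - complex.Im v by case: u; case: v.
case: eq_ij => eq_Re eq_Im.
have [Re_j Im_j] := unit_circle_Re_Im (hzn j).
have [Re_i Im_i] := unit_circle_Re_Im (hzn i).
rewrite lecR ReB ImB (_ : 4 / K%:R = 2 / K%:R + 2 / K%:R); last first.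
  by rewrite -mulrDl; congr (_ / _); rewrite -natrD.
by apply/ltW/ltrD; apply: cell_dist.
Qed.

Lemma norm_progression_blocks_le (R : rcfType) (d : nat -> R) (z : R[i]) (B q m : nat) (del : R) :
  (forall t, `|d t| <= 1) -> `|z| = 1 -> `|z ^+ q - 1| <= del%:C ->
  `|\sum_(0 <= b < B) \sum_(0 <= j < q) \sum_(0 <= i < m)
      (d (b * (q * m) + j + i * q)%N)%:C * z ^+ (b * (q * m) + j + i * q)|
  <= (\sum_(0 <= b < B) \sum_(0 <= j < q)
        (`|\sum_(0 <= i < m) d (b * (q * m) + j + i * q)%N| + (m * m)%:R * del))%:C.
Proof.
move=> hd hz hdel; have hzn k : `|z ^+ k| = 1 by rewrite normrX hz expr1n.
rewrite rmorph_sum; apply: le_trans (ler_norm_sum _ _ _) _; apply: ler_sum => b _.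
rewrite rmorph_sum; apply: le_trans (ler_norm_sum _ _ _) _; apply: ler_sum => j _.
set a := (b * (q * m) + j)%N.
rewrite (eq_bigr (fun i => (d (a + i * q)%N)%:C * (z ^+ a * (z ^+ q) ^+ i))); last first.
  by move=> i _; rewrite -exprM -exprD (mulnC q).
apply: le_trans (norm_sum_progression_le m (d := fun i => d (a + i * q)%N)
  (fun i => hd _) (hzn _) (hzn _)) _.
by rewrite rmorphD lerD2l [X in _ <= X]rmorphM /= rmorph_nat ler_wpM2l.
Qed.

Lemma norm_balanced_exp_sum_le (R : rcfType) (d : nat -> R) (z : R[i]) (n q m : nat) (e del : R) :
  (0 < q)%N -> (0 < m)%N -> 0 <= e -> `|z| = 1 -> `|z ^+ q - 1| <= del%:C ->
  (forall t, `|d t| <= 1) ->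
  (forall a, \sum_(0 <= i < m) d (a + i * q)%N <= m%:R * e) ->
  \sum_(0 <= t < n) d t = 0 ->
  `|\sum_(0 <= t < n) (d t)%:C * z ^+ t|
    <= (n%:R * (2 * e + m%:R * del) + 2 * (q * m)%:R)%:C.
Proof.
move=> q_gt0 m_gt0 e_ge0 hz hdel hd progression_le sum_d.
have del_ge0 : 0 <= del by rewrite -ler0c (le_trans _ hdel).
set L := (q * m)%N; set B := (n %/ L)%N; set r := (n - B * L)%N.
have BL_le : (B * L <= n)%N := leq_trunc_div n L.
have r_le : (r <= L)%N.
  by rewrite /r {1}(divn_eq n L) -/B addnC addnK ltnW // ltn_pmod // muln_gt0 q_gt0.
have tail_le : `|\sum_(B * L <= t < n) (d t)%:C * z ^+ t| <= r%:R.
  have term_le t : `|(d t)%:C * z ^+ t| <= 1.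
    by rewrite normrM normrX hz expr1n mulr1 normcR -[1 : R[i]]/(1%:C) lecR.
  apply: le_trans (ler_norm_sum _ _ _) _.
  by apply: le_trans (ler_sum _ (fun t _ => term_le t)) _; rewrite sumr_const_nat.
rewrite (big_nat_progressions _ BL_le) -/L.
apply: le_trans (ler_normD _ _) _.
apply: le_trans (lerD (norm_progression_blocks_le B m hd hz hdel) tail_le) _.
rewrite -[r%:R : R[i]](rmorph_nat (real_complex R)) -rmorphD lecR -/L.
under eq_bigr do rewrite big_split /= sumr_const_nat subn0.
rewrite big_split /= sumr_const_nat subn0 -mulrnA (mulnC q) -mulr_natl.
have d_le t : d t <= 1 by have := hd t; rewrite ler_norml => /andP[].
have := sum_norm_progression_sums_le BL_le (mulr_ge0 (ler0n _ m) e_ge0) d_le progression_le sum_d.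
rewrite -/L -/r => sum_norm_le.
have BqL_le : (B * q)%:R * m%:R <= n%:R :> R by rewrite -natrM -mulnA ler_nat.
have := ler_wpM2r (mulr_ge0 (ler0n _ 2) e_ge0) BqL_le.
have := ler_wpM2r (mulr_ge0 (ler0n _ m) del_ge0) BqL_le.
have : r%:R <= L%:R :> R by rewrite ler_nat.
rewrite natrM; lra.
Qed.

Local Open Scope fset_scope.

Lemma big_fset_in_range (V : nmodType) (A : {fset int}) (n : nat) (G : int -> V) :
  in_range n A ->
  \sum_(a <- A) G a = \sum_(0 <= t < n) (if Posz t.+1 \in A then G (Posz t.+1) else 0).
Proof.
move=> A_range.
rewrite -(big_map (fun t => Posz t.+1) xpredT (fun x => if x \in A then G x else 0)).
rewrite -big_mkcond /= -[RHS]big_filter.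
apply: perm_big; apply: uniq_perm.
- exact: fset_uniq.
- by apply: filter_uniq; rewrite map_inj_uniq ?iota_uniq // => x y [].
move=> x; rewrite mem_filter; case xA: (x \in A) => //=.
have /andP[x_ge1 x_len] := A_range x xA.
apply/esym/mapP; exists (`|x|%N.-1); first by rewrite mem_index_iota; lia.
lia.
Qed.

Lemma card_in_range (A : {fset int}) (n : nat) : in_range n A -> (#|` A| <= n)%N.
Proof.
move=> A_range; rewrite card_fset_sum1 (big_fset_in_range (fun _ => 1%N) A_range).
apply: (@leq_trans (\sum_(0 <= t < n) 1)%N); last by rewrite sum_nat_const_nat subn0 muln1.
by apply: leq_sum => t _; case: ifP.
Qed.

(* The progression a+1, a+1+q, ..., a+1+(m-1)q is the affine image of {1, ..., m}. *)
Lemma card_progression_le (P : {fset int} -> Prop) (m : nat) (Sm A : {fset int}) (a q : nat) :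
  affine_property P -> is_max_P P m Sm -> P A -> (0 < q)%N ->
  (\sum_(0 <= i < m) ((Posz (a + i * q).+1 \in A) : nat) <= #|` Sm|)%N.
Proof.
move=> [P_affine P_sub] [_ _ Sm_max] PA q_gt0.
pose beta : int := Posz a.+1 - Posz q.
pose s := [seq x <- [seq Posz i.+1 | i <- index_iota 0 m] | (Posz q * x + beta)%R \in A].
have s_uniq : uniq s.
  by apply: filter_uniq; rewrite map_inj_uniq ?iota_uniq // => x y [].
have -> : (\sum_(0 <= i < m) ((Posz (a + i * q).+1 \in A) : nat))%N = #|` [fset x in s]|.
  rewrite card_fseq undup_id // size_filter count_map -sum1_count [RHS]big_mkcond /=.
  apply: eq_bigr => i _.
  by rewrite (_ : (Posz q * Posz i.+1 + beta)%R = Posz (a + i * q).+1) //; lia.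
apply: Sm_max.
- move=> x; rewrite inE mem_filter => /andP[_ /mapP[i + ->]].
  by rewrite mem_index_iota; lia.
- apply/(P_affine (Posz q) beta); first by rewrite eqz_nat -lt0n.
  apply: P_sub PA; apply/fsubsetP => _ /imfsetP[x /= + ->].
  by rewrite inE mem_filter => /andP[].
Qed.

Definition density {R : numFieldType} (A : {fset int}) (n : nat) : R := #|` A|%:R / n%:R.

Lemma density_ge0 (R : numFieldType) (A : {fset int}) (n : nat) : 0 <= density A n :> R.
Proof. by rewrite divr_ge0. Qed.

Lemma sum_expr_in_range (R : rcfType) (A : {fset int}) (n : nat) (C : R) (z : R[i]) :
  in_range n A ->
  \sum_(a <- A) z ^ a - C%:C * \sum_(1 <= k < n.+1) z ^+ k
  = z * \sum_(0 <= t < n) (((Posz t.+1 \in A) : nat)%:R - C)%:C * z ^+ t.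
Proof.
move=> A_range.
rewrite (big_fset_in_range (fun a => z ^ a) A_range) big_add1 /= !mulr_sumr -sumrB.
apply: eq_bigr => t _; rewrite -exprnP exprS rmorphB /=.
by case: (_ \in A); rewrite /= ?rmorph1 ?rmorph0; ring.
Qed.

Lemma is_max_P_discrepancy_le (R : rcfType) (P : {fset int} -> Prop) (m n q : nat)
    (Sm Sn : {fset int}) (z : R[i]) (e del : R) :
  affine_property P -> is_max_P P m Sm -> is_max_P P n Sn ->
  (0 < m)%N -> (0 < n)%N -> (0 < q)%N -> 0 <= e ->
  density Sm m - e <= density Sn n -> `|z| = 1 -> `|z ^+ q - 1| <= del%:C ->
  `|\sum_(a <- Sn) z ^ a - (density Sn n)%:C * \sum_(1 <= k < n.+1) z ^+ k|
    <= (n%:R * (2 * e + m%:R * del) + 2 * (q * m)%:R)%:C.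
Proof.
move=> hP max_Sm [Sn_range PSn _] m_gt0 n_gt0 q_gt0 e_ge0 Sm_density_le hz hzq.
have n_pos : 0 < n%:R :> R by rewrite ltr0n.
pose d t : R := ((Posz t.+1 \in Sn) : nat)%:R - density Sn n.
rewrite sum_expr_in_range // normrM hz mul1r.
apply: (norm_balanced_exp_sum_le (d := d)) => // [t|a|].
- have : density Sn n <= 1 :> R.
    by rewrite ler_pdivrMr // mul1r ler_nat card_in_range.
  by have := density_ge0 R Sn n; rewrite /d ler_norml; case: (_ \in _) => /=; lra.
- have := card_progression_le a hP max_Sm PSn q_gt0; rewrite -(ler_nat R).
  have -> : #|` Sm|%:R = m%:R * density Sm m :> R.
    by rewrite /density mulrC divfK // pnatr_eq0 -lt0n.
  have : 0 <= m%:R :> R by [].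
  by rewrite /d sumrB sumr_const_nat subn0 -natr_sum -mulr_natl; nra.
- rewrite sumrB sumr_const_nat subn0 -mulr_natl /density mulrC divfK ?lt0r_neq0 //.
  by rewrite -natr_sum -(big_fset_in_range (fun _ => 1%N) Sn_range) -card_fset_sum1 subrr.
Qed.

Theorem mainTheorem2 (R : realType) (P : {fset int} -> Prop)
  (hP : affine_property P) (S : nat -> {fset int})
  (hS : forall n : nat, (0 < n)%N -> is_max_P P n (S n)) :
  forall eps : R, 0 < eps ->
  exists N : nat, forall n : nat, (0 < n)%N -> (N <= n)%N ->
  forall z : R[i], `|z| = 1 ->
    `| \sum_(a <- S n) z ^ a
       - ((#|` S n|)%:R / n%:R) * \sum_(1 <= k < n.+1) z ^+ k |
    <= ((eps * n%:R)%:C)%C.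
Proof.
move=> eps eps_gt0; have e_gt0 : 0 < eps / 4 by rewrite divr_gt0.
have [m m_gt0 m_near_inf] :=
  exists_near_inf (g := fun k => density (S k) k) (fun k _ => density_ge0 R (S k) k) e_gt0.
(* K and N are chosen so that the error terms 2 e n, (4 m / K) n and 2 q m of
   is_max_P_discrepancy_le are at most eps n / 2, eps n / 4 and eps n / 4. *)
pose K := (Num.truncn (16 * m%:R / eps)).+1.
pose N := (Num.truncn (8 * (K.+1 ^ 2 * m)%:R / eps)).+1.
exists N => n n_gt0 N_le z hz.
have [q /andP[q_gt0 q_le] hzq] := dirichlet_unit_circle (ltn0Sn _ : (0 < K)%N) hz.
have -> : (#|` S n|)%:R / n%:R = (density (S n) n : R)%:C.
  by rewrite /density fmorph_div !rmorph_nat.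
apply: le_trans (is_max_P_discrepancy_le hP (hS m m_gt0) (hS n n_gt0)
  m_gt0 n_gt0 q_gt0 (ltW e_gt0) (m_near_inf n n_gt0) hz hzq) _.
rewrite lecR.
have mesh_le : m%:R * (4 / K%:R) <= eps / 4.
  have := truncnS_gt (16 * m%:R / eps); rewrite -/K ltr_pdivrMr // => K_gt.
  by rewrite mulrA ler_pdivrMr ?ltr0n //; lra.
have tail_le : 2 * (q * m)%:R <= eps / 4 * n%:R.
  have := truncnS_gt (8 * (K.+1 ^ 2 * m)%:R / eps); rewrite -/N ltr_pdivrMr // => N_gt.
  have : (q * m)%:R <= (K.+1 ^ 2 * m)%:R :> R by rewrite ler_nat leq_mul.
  have : N%:R * eps <= n%:R * eps by rewrite ler_pM2r // ler_nat.
  lra.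
have := ler_wpM2l (ler0n _ n) mesh_le; lra.
Qed.
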